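(* Let $m,k$ be natural numbers. If the leading term in the hereditary representation in base $k+1$ of the $k$-th term $G(k,m)$ of the Goodstein sequence $G(m)$ is of the form $1\cdot(k+1)^{l}$ with $k+1>l$, then $G(k+1,m)>G(k,m)$ if $l>1$, $G(k+1,m)=G(k,m)$ if $l=1$, and $G(k+1,m)<G(k,m)$ if $l=0$.
   Context: For a natural number base $b>1$, the hereditary representation $m\langle b\rangle$ of $m$ is $\sum_{i=0}^{l} a_i b^{i}$ with $0\le a_i<b$, $a_l\ne0$, each exponent itself written in hereditary representation in base $b$, recursively; its leading term is $a_l b^{l}$. $m\langle b\rangle''$ is obtained by syntactically replacing every $b$ by $b+1$ in $m\langle b\rangle$. The Goodstein sequence $G(m)=\{m, m''-1, (m''-1)''-1,\dots\}$ starts from $m$ in base $2$; its $n$-th term is $G(n,m)$, with $G(1,m)=m$ in base $2$, $G(k,m)$ written in base $k+1$, and $G(k+1,m)=G(k,m)\langle k+1\rangle''-1$. *)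

From mathcomp Require Import all_boot.
Set Implicit Arguments. Unset Strict Implicit. Unset Printing Implicit Defensive.

(* Hereditary base-b representation (b > 1) of n > 0:
   n = a * b^l + r  with  l = trunc_log b n (exponent of the leading term),
   a = n %/ b^l (leading digit, 0 < a < b), r = n - a * b^l < b^l,
   the exponent l and the remainder r being themselves written hereditarily. *)

Definition lead_exp (b n : nat) : nat := trunc_log b n.
Definition lead_digit (b n : nat) : nat := n %/ b ^ lead_exp b n.

(* bumpf fuel b n : value of n<b>'' (replace every b by b+1 in the hereditary
   base-b representation of n); the fuel only ensures termination
   (both l and r are < n, so fuel n.+1 suffices). *)
Fixpoint bumpf (fuel b n : nat) : nat :=
  match fuel with
  | 0 => 0
  | f.+1 =>
      if n is 0 then 0 else
      let l := trunc_log b n in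
      let a := n %/ b ^ l in
      a * b.+1 ^ (bumpf f b l) + bumpf f b (n - a * b ^ l)
  end.

Definition hbump (b n : nat) : nat := bumpf n.+1 b n.

(* Goodstein sequence: G(1,m) = m, G(k+1,m) = G(k,m)<k+1>'' - 1.
   (G(0,m) is not used by the paper; set to m.) *)
Fixpoint goodstein (k m : nat) : nat :=
  match k with
  | 0 => m
  | k'.+1 => if k' is 0 then m else hbump k'.+1 (goodstein k' m) - 1
  end.

From mathcomp Require Import all_boot zify.

(* Write b = k + 1 and n = G(k, m) = b^l + r with r < b^l. Since l < b, the
   exponent l is a single digit and survives the base change, so
   G(k + 1, m) = (b + 1)^l + r'' - 1 with r <= r''. For l > 1 the jump from
   b^l to (b + 1)^l is at least 2; for l = 1 the remainder r < b is a digit,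
   so r'' = r and the - 1 cancels the jump from b to b + 1; for l = 0 we have
   n = 1 and the sequence drops to 0. *)

Section HereditaryBump.

Variable b : nat.
Hypothesis b_gt1 : 1 < b.

Lemma lead_exp_lt [n] : 0 < n -> lead_exp b n < n.
Proof. by move=> n_gt0; apply: leq_trans (trunc_logP b_gt1 n_gt0); apply: ltn_expl. Qed.

Lemma lead_rem_lt [n] : 0 < n -> n - lead_digit b n * b ^ lead_exp b n < n.
Proof.
move=> n_gt0; have bl_le := trunc_logP b_gt1 n_gt0.
have a_gt0 : 0 < lead_digit b n by rewrite divn_gt0 ?expn_gt0 ?(ltnW b_gt1).
have : 0 < lead_digit b n * b ^ lead_exp b n by rewrite muln_gt0 a_gt0 expn_gt0 ltnW.
lia.
Qed.

Lemma bumpfS f n : 0 < n ->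
  bumpf f.+1 b n = lead_digit b n * b.+1 ^ bumpf f b (lead_exp b n)
                   + bumpf f b (n - lead_digit b n * b ^ lead_exp b n).
Proof. by case: n. Qed.

(* The recursive calls are on the leading exponent and the remainder, both
   smaller than n. *)
Lemma bumpf_fuel f f' n : n < f -> n < f' -> bumpf f b n = bumpf f' b n.
Proof.
elim: f f' n => [//|f IH] [//|f'] [//|n] n_lt n_lt'; rewrite !bumpfS //.
have l_lt := lead_exp_lt (ltn0Sn n); have r_lt := lead_rem_lt (ltn0Sn n).
by rewrite (IH f') ?(IH f') //; lia.
Qed.

Lemma hbump0 : hbump b 0 = 0.
Proof. by []. Qed.

Lemma hbumpE n : 0 < n ->
  hbump b n = lead_digit b n * b.+1 ^ hbump b (lead_exp b n)
              + hbump b (n - lead_digit b n * b ^ lead_exp b n).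
Proof.
move=> n_gt0; have l_lt := lead_exp_lt n_gt0; have r_lt := lead_rem_lt n_gt0.
by rewrite /hbump bumpfS //; congr (_ * _ ^ _ + _); apply: bumpf_fuel.
Qed.

Lemma hbump_digit x : x < b -> hbump b x = x.
Proof.
case: x => // x x_lt; rewrite hbumpE //.
have l0 : lead_exp b x.+1 = 0 by apply/eqP; rewrite trunc_log_eq0; lia.
have a_eq : lead_digit b x.+1 = x.+1 by rewrite /lead_digit l0 expn0 divn1.
by rewrite l0 a_eq !expn0 muln1 subnn hbump0 addn0.
Qed.

Lemma leq_hbump n : n <= hbump b n.
Proof.
elim/ltn_ind: n => [[//|n] IH]; rewrite hbumpE //.
set l := lead_exp b n.+1; set a := lead_digit b n.+1.
have al_le : a * b ^ l <= n.+1 by rewrite leq_divM.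
have l_le : l <= hbump b l by apply/IH/lead_exp_lt.
have r_le : n.+1 - a * b ^ l <= hbump b (n.+1 - a * b ^ l) by apply/IH/lead_rem_lt.
have pow_le : b ^ l <= b.+1 ^ hbump b l.
  apply: leq_trans (leq_pexp2l (ltn0Sn b) l_le).
  by case: (l) => // l'; rewrite leq_exp2r.
have : a * b ^ l <= a * b.+1 ^ hbump b l by rewrite leq_mul2l pow_le orbT.
lia.
Qed.

Lemma lead_digit1_bounds n : 0 < n -> lead_digit b n = 1 ->
  b ^ lead_exp b n <= n < (b ^ lead_exp b n).*2.
Proof.
move=> n_gt0 a1; rewrite trunc_logP // -mul2n -ltn_divLR; last by rewrite expn_gt0 ltnW.
by rewrite -/(lead_exp b n) -/(lead_digit b n) a1.
Qed.

Lemma hbump_lead_digit1 n : 0 < n -> lead_digit b n = 1 -> lead_exp b n < b ->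
  hbump b n = b.+1 ^ lead_exp b n + hbump b (n - b ^ lead_exp b n).
Proof. by move=> n_gt0 a1 l_lt; rewrite hbumpE // a1 !mul1n hbump_digit. Qed.

End HereditaryBump.

Lemma expSn_ge_add2 b l : 0 < b -> 1 < l -> b ^ l + 2 <= b.+1 ^ l.
Proof.
case: l => [|[|l]] // b_gt0 _; rewrite !expnS.
have : b ^ l <= b.+1 ^ l by case: l => // l; rewrite leq_exp2r.
have : 0 < b ^ l by rewrite expn_gt0 b_gt0.
nia.
Qed.

Theorem lemma5 (m k l : nat) :
  0 < k ->
  0 < goodstein k m ->
  lead_digit k.+1 (goodstein k m) = 1 ->
  lead_exp k.+1 (goodstein k m) = l ->
  l < k.+1 ->
  [/\ (1 < l -> goodstein k.+1 m > goodstein k m),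
      (l = 1 -> goodstein k.+1 m = goodstein k m) &
      (l = 0 -> goodstein k.+1 m < goodstein k m)].
Proof.
case: k => // k _; set b := k.+2; set n := goodstein k.+1 m.
have -> : goodstein k.+2 m = hbump b n - 1 by [].
move=> n_gt0 a1 l_def l_lt; have b_gt1 : 1 < b by [].
have := lead_digit1_bounds _ b_gt1 _ n_gt0 a1; rewrite l_def => /andP[bl_le n_lt].
rewrite hbump_lead_digit1 ?l_def //.
have := leq_hbump _ b_gt1 (n - b ^ l).
split=> [l_gt1 | l1 | l0].
- by have := expSn_ge_add2 b l (ltnW b_gt1) l_gt1; lia.
- by rewrite l1 expn1 in bl_le n_lt *; rewrite hbump_digit //; lia.
- have n1 : n = 1 by rewrite l0 in bl_le n_lt; lia.
  by rewrite l0 expn0 n1 subnn.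
Qed.
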